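(* Let $(M,\le)$ be a finite modular lattice and $Q$ a saturated cover on $M$. If $x\le y\le w\le z$ in $M$ and $x\,\langle Q\rangle\,z$, then $y\,\langle Q\rangle\,w$.
   Context: A lattice $M$ is modular if $a\le b$ implies $a\vee(x\wedge b)=(a\vee x)\wedge b$. A transfer system on a finite lattice $(P,\le)$ is a partial order $R$ refining $\le$ closed under restriction: $x\,R\,z$ and $y\le z$ imply $(x\wedge y)\,R\,y$. For a set $Q$ of pairs $(x,y)$ with $x\le y$, $\langle Q\rangle$ is the intersection of all transfer systems containing $Q$. A covering diamond is a quadruple $x,y,x\wedge y,x\vee y$ with $x\ne y$ such that $x\vee y$ covers $x$ and $y$ and both cover $x\wedge y$. A saturated cover on $M$ is a set $Q$ of covering relations of $M$ such that (1) for all $x,y$, if $x\,Q\,(x\vee y)$ then $(x\wedge y)\,Q\,y$; (2) for every covering diamond, if three of its four covering relations lie in $Q$, so does the fourth. *)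

From HB Require Import structures.
From mathcomp Require Import all_boot all_order.
Set Implicit Arguments. Unset Strict Implicit. Unset Printing Implicit Defensive.
Import Order.TTheory.
Local Open Scope order_scope.

Section TransferSystems.
Context {d : Order.disp_t} {M : finLatticeType d}.

Definition modular : Prop :=
  forall a b x : M, a <= b -> a `|` (x `&` b) = (a `|` x) `&` b.

Definition transfer_system (R : M -> M -> Prop) : Prop :=
  [/\ (forall x, R x x),
      (forall x y, R x y -> R y x -> x = y),
      (forall x y z, R x y -> R y z -> R x z),
      (forall x y, R x y -> x <= y)
    & (forall x y z, R x z -> y <= z -> R (x `&` y) y)].

Definition gen_transfer (Q : M -> M -> Prop) (x y : M) : Prop :=
  forall R, transfer_system R -> (forall a b, Q a b -> R a b) -> R x y.

Definition covers (a b : M) : Prop :=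
  a < b /\ ~ (exists c, a < c /\ c < b).

Definition covering_diamond (x y : M) : Prop :=
  [/\ x <> y, covers x (x `|` y), covers y (x `|` y),
      covers (x `&` y) x & covers (x `&` y) y].

Definition saturated_cover (Q : M -> M -> Prop) : Prop :=
  [/\ (forall a b, Q a b -> covers a b),
      (forall x y, Q x (x `|` y) -> Q (x `&` y) y)
    & (forall x y, covering_diamond x y ->
        let q1 := Q (x `&` y) x in let q2 := Q (x `&` y) y in
        let q3 := Q x (x `|` y) in let q4 := Q y (x `|` y) in
        [/\ q2 -> q3 -> q4 -> q1,
            q1 -> q3 -> q4 -> q2,
            q1 -> q2 -> q4 -> q3
          & q1 -> q2 -> q3 -> q4])].

End TransferSystems.

From HB Require Import structures.
From mathcomp Require Import all_boot all_order.
Import Order.TTheory.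
Local Open Scope order_scope.
Set Implicit Arguments. Unset Strict Implicit.

(* Call an interval [x, z] Q-full when x <= z and every covering
   relation a ⋖ b with x <= a and b <= z belongs to Q.  The relation
   "[x, z] is Q-full" is
   - a transfer system containing Q (the only non-trivial axiom being
     transitivity, where the diamond axiom of a saturated cover is used along
     a maximal chain, via modularity), so it contains <Q>;
   - contained in <Q>, since a Q-full interval is a chain of Q-covers.
   Hence <Q> coincides with Q-fullness, which is obviously inherited by
   subintervals: this is the theorem. *)

Lemma fin_wf_ind (T : finType) (r : rel T) :
  (forall x y z, r x y -> r y z -> r x z) -> irreflexive r ->
  forall P : T -> Prop, (forall x, (forall y, r y x -> P y) -> P x) ->
  forall x, P x.
Proof.
move=> r_trans r_irr P IH x.
have [n] := ubnP #|[set u | r u x]|; elim: n x => // n IHn x below_x.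
rewrite ltnS in below_x; apply: IH => y r_yx; apply: IHn.
apply: leq_trans below_x.
apply: proper_card; apply/properP; split.
  by apply/subsetP => u; rewrite !inE => /r_trans; apply.
by exists y; rewrite !inE ?r_irr.
Qed.

Section FiniteLattice.
Context {d : Order.disp_t} {M : finLatticeType d}.
Implicit Types a b c p q u v x y : M.

Lemma lt_ind (P : M -> Prop) :
  (forall x, (forall y, y < x -> P y) -> P x) -> forall x, P x.
Proof. by apply: fin_wf_ind => [x y z|x]; [apply: lt_trans|rewrite ltxx]. Qed.

Lemma gt_ind (P : M -> Prop) :
  (forall x, (forall y, x < y -> P y) -> P x) -> forall x, P x.
Proof.
apply: (@fin_wf_ind _ (fun u v => v < u)) => [x y z yx zy|x].
  exact: lt_trans zy yx.
by rewrite ltxx.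
Qed.

Lemma covers_le a b : covers a b -> a <= b.
Proof. by case=> /ltW. Qed.

Lemma covers_neq a b : covers a b -> a <> b.
Proof. by case=> ab _ eab; rewrite eab ltxx in ab. Qed.

Lemma covers_between a b c : covers a b -> a <= c -> c <= b -> c = a \/ c = b.
Proof.
move=> [_ empty] ac cb.
case: (eqVneq c a) => [|ca]; first by left.
case: (eqVneq c b) => [|cb']; first by right.
by case: empty; exists c; rewrite lt_def ca ac lt_neqAle cb' cb.
Qed.

Lemma covers_inside_cover a b u v :
  covers a b -> a <= u -> covers u v -> v <= b -> u = a /\ v = b.
Proof.
move=> ab au uv vb; have uv_le := covers_le uv.
have [ua|ub] := covers_between ab au (le_trans uv_le vb); last first.
  by case: uv => lt_uv _; move: (lt_le_trans lt_uv vb); rewrite ub ltxx.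
subst u; have [va|] := covers_between ab uv_le vb => //.
by case: (covers_neq uv).
Qed.

Lemma meet_pinned p q c a : p <= q -> p <= c -> c <= a -> a `&` q = p ->
  c `&` q = p.
Proof.
move=> pq pc ca aq; apply/le_anti; rewrite lexI pc pq andbT.
by rewrite -aq leI2.
Qed.

Lemma exists_cover_above x y : x < y -> exists2 c, covers x c & c <= y.
Proof.
elim/lt_ind: y => y IH xy.
case: (boolP [exists u, (x < u) && (u < y)]) => [/existsP[u /andP[xu uy]]|].
  by have [c xc cu] := IH u uy xu; exists c => //; apply: le_trans cu (ltW uy).
move/existsPn => empty; exists y => //; split=> // -[c [xc cy]].
by have := empty c; rewrite xc cy.
Qed.

Lemma exists_cover_below x y : x < y -> exists2 c, x <= c & covers c y.
Proof.
elim/gt_ind: x => x IH xy.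
case: (boolP [exists u, (x < u) && (u < y)]) => [/existsP[u /andP[xu uy]]|].
  by have [c uc cy] := IH u xu uy; exists c => //; apply: le_trans (ltW xu) uc.
move/existsPn => empty; exists x => //; split=> // -[c [xc cy]].
by have := empty c; rewrite xc cy.
Qed.

End FiniteLattice.

Section ModularLattice.
Context {d : Order.disp_t} {M : finLatticeType d}.
Hypothesis modM : modular (M := M).
Implicit Types a b c p q u v y : M.

Lemma join_meet_absorb u v y : u <= v -> y `&` v <= u -> (u `|` y) `&` v = u.
Proof. by move=> uv yv; rewrite -modM // join_l. Qed.

Lemma covers_join u v y :
  covers u v -> y `&` v <= u -> covers (u `|` y) (v `|` y).
Proof.
move=> uv yv; have uv_le := covers_le uv.
have absorb := join_meet_absorb uv_le yv.
split.
  rewrite lt_def leU2 // andbT; apply/eqP => eq_join.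
  by apply: (covers_neq uv); rewrite -absorb -eq_join meetC joinKI.
move=> [c [lt_uy_c lt_c_vy]].
have yc : y <= c by apply: le_trans (ltW lt_uy_c); apply: leUr.
have uc : u <= c `&` v.
  by rewrite lexI uv_le andbT; apply: le_trans (ltW lt_uy_c); apply: leUl.
(* By modularity c is recovered from its trace on v. *)
have c_trace : c = (c `&` v) `|` y.
  by rewrite joinC meetC modM // meet_r // joinC ltW.
have [cv_u|cv_v] := covers_between uv uc (leIr v c).
  by move: lt_uy_c; rewrite c_trace cv_u ltxx.
have vy_c : v `|` y <= c by rewrite leUx yc -cv_v leIl.
by move: (lt_le_trans lt_c_vy vy_c); rewrite ltxx.
Qed.

Lemma covers_meet a b y :
  covers a b -> ~~ (y `&` b <= a) -> covers (a `&` y) (b `&` y).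
Proof.
move=> ab yb; have ab_le := covers_le ab.
split.
  rewrite lt_def leI2 // andbT; apply: contra yb => /eqP eq_meet.
  by rewrite meetC eq_meet leIl.
move=> [c [lt_ay_c lt_c_by]].
have c_by := ltW lt_c_by.
have ac_b : a `|` c <= b by rewrite leUx ab_le (le_trans c_by) ?leIl.
have [ac_a|ac_b'] := covers_between ab (leUl a c) ac_b.
  have c_ay : c <= a `&` y by rewrite lexI -{1}ac_a leUr (le_trans c_by) ?leIr.
  by move: (lt_le_trans lt_ay_c c_ay); rewrite ltxx.
(* By modularity c is recovered from its join with a. *)
have : c `|` (a `&` (b `&` y)) = (c `|` a) `&` (b `&` y) by rewrite modM.
rewrite meetA (meet_l ab_le) (join_l (ltW lt_ay_c)) joinC ac_b' meetA meetxx.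
by move=> c_eq; move: lt_c_by; rewrite c_eq ltxx.
Qed.

Lemma covers_translate p q c : covers p q -> p <= c -> c `&` q = p ->
  covers c (c `|` q).
Proof.
move=> pq pc cq.
have := covers_join pq (_ : c `&` q <= p); rewrite cq => /(_ (lexx p)).
by rewrite (join_r pc) joinC.
Qed.

End ModularLattice.

Section SaturatedCover.
Context {d : Order.disp_t} {M : finLatticeType d}.
Hypothesis modM : modular (M := M).
Variable Q : M -> M -> Prop.
Hypothesis satQ : saturated_cover Q.
Implicit Types a b c p q u v x y z : M.

Lemma Q_covers u v : Q u v -> covers u v.
Proof. by case: satQ => + _ _; apply. Qed.

(* Restriction axiom of a saturated cover, in the form of a translation: a
   Q-cover u `|` y ⋖ v `|` y comes from the Q-cover u ⋖ v. *)
Lemma Q_pushdown u v y :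
  covers u v -> y `&` v <= u -> Q (u `|` y) (v `|` y) -> Q u v.
Proof.
move=> uv yv; case: satQ => _ restrQ _.
have := restrQ (u `|` y) v.
rewrite (join_meet_absorb modM) // ?covers_le // -joinA (joinC y v) joinA.
by rewrite (join_r (covers_le uv)).
Qed.

(* One step of the diamond argument: for c' ⋖ c above p with c `&` q = p,
   the elements c, c' `|` q form a covering diamond with bottom c' and top
   c `|` q, three of whose sides are Q-covers. *)
Lemma Q_diamond_step p q c' c :
  covers p q -> p <= c' -> covers c' c -> c `&` q = p ->
  Q c' c -> Q c' (c' `|` q) -> Q (c' `|` q) (c `|` q) -> Q c (c `|` q).
Proof.
move=> pq pc' c'c cq Qc'c Qc'd Qdtop.
have c'c_le := covers_le c'c.
have pq_le := covers_le pq.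
have c'q : c' `&` q = p := meet_pinned pq_le pc' c'c_le cq.
have top : c `|` (c' `|` q) = c `|` q by rewrite joinA (join_l c'c_le).
have bot : c `&` (c' `|` q) = c'.
  by rewrite meetC -modM // meetC cq (join_l pc').
have c_neq : c <> c' `|` q.
  move=> c_eq; apply: (covers_neq pq); rewrite -cq meet_r //.
  by rewrite c_eq leUr.
have diamond : covering_diamond c (c' `|` q).
  split; rewrite ?top ?bot //.
  - exact: (covers_translate modM pq (le_trans pc' c'c_le) cq).
  - by apply: (covers_join modM); rewrite // meetC cq.
  - exact: (covers_translate modM pq pc' c'q).
case: satQ => _ _ /(_ _ _ diamond); rewrite /= top bot => -[_ _ Qside _].
exact: Qside.
Qed.

(* Propagation of a Q-cover p ⋖ q to a ⋖ a `|` q along [p, a], by induction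
   on a maximal chain of [p, a]: it suffices that all covers in the bottom
   interval [p, a] and in the top interval [q, a `|` q] are Q-covers. *)
Lemma Q_translate p q a : covers p q -> Q p q -> p <= a -> a `&` q = p ->
  (forall u v, covers u v -> p <= u -> v <= a `|` q ->
     (v <= a) || (q <= u) -> Q u v) ->
  Q a (a `|` q).
Proof.
move=> pq Qpq pa aq Qsides.
suff: forall c, p <= c -> c <= a -> Q c (c `|` q) by apply.
elim/(@lt_ind _ M) => c IH pc ca.
case: (eqVneq p c) => [<-|]; first by rewrite (join_r (covers_le pq)).
move=> pc_neq; have [c' pc' c'c] : exists2 c', p <= c' & covers c' c.
  by apply: exists_cover_below; rewrite lt_def eq_sym pc_neq pc.
have c'c_le := covers_le c'c.
have cq : c `&` q = p := meet_pinned (covers_le pq) pc ca aq.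
have c_aq : c `|` q <= a `|` q by rewrite leU2.
apply: (Q_diamond_step pq pc' c'c cq).
- apply: Qsides; rewrite ?ca //; exact: le_trans ca (leUl _ _).
- by apply: IH; rewrite ?(le_trans c'c_le); case: c'c.
- apply: Qsides; rewrite ?leUr ?orbT //.
  + by apply: (covers_join modM); rewrite // meetC cq.
  + exact: le_trans pc' (leUl _ _).
Qed.

Definition Qfull x z : Prop :=
  x <= z /\ forall a b, x <= a -> covers a b -> b <= z -> Q a b.

Lemma Qfull_sub x y w z : Qfull x z -> x <= y -> y <= w -> w <= z -> Qfull y w.
Proof.
move=> [_ fullQ] xy yw wz; split=> // a b ya ab bw.
by apply: fullQ ab (le_trans bw wz); apply: le_trans xy ya.
Qed.

Lemma Qfull_lift y z u v :
  Qfull y z -> covers u v -> v <= z -> y `&` v <= u -> Q u v.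
Proof.
move=> [yz fullQ] uv vz yv; apply: (Q_pushdown uv yv).
apply: fullQ (leUr _ _) (covers_join modM uv yv) _.
by rewrite leUx vz yz.
Qed.

Lemma Qfull_restrict x y z : Qfull x z -> y <= z -> Qfull (x `&` y) y.
Proof.
move=> full_xz yz; split=> [|a b xya ab yb]; first exact: leIr.
apply: (Qfull_lift full_xz ab (le_trans yb yz)).
by apply: le_trans xya; apply: leI2.
Qed.

(* Transitivity: a cover a ⋖ b of [x, z] either translates into [y, z], or
   meets y in a Q-cover of [x, y] which Q_translate carries up to a ⋖ b. *)
Lemma Qfull_trans x y z : Qfull x y -> Qfull y z -> Qfull x z.
Proof.
move=> full_xy full_yz; have [xy fullQ_xy] := full_xy; have [yz _] := full_yz.
split=> [|a b xa ab bz]; first exact: le_trans xy yz.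
have ab_le := covers_le ab.
case: (boolP (y `&` b <= a)) => [yb|not_yb]; first exact: Qfull_lift ab bz yb.
set p := a `&` y; set q := b `&` y.
have pq : covers p q := covers_meet modM ab not_yb.
have aq : a `&` q = p by rewrite /q meetA (meet_l ab_le).
have aq_b : a `|` q = b.
  have aq_le_b : a `|` q <= b by rewrite leUx ab_le leIl.
  have [aq_a|//] := covers_between ab (leUl a q) aq_le_b.
  by move: not_yb; rewrite meetC -/q -aq_a leUr.
rewrite -aq_b; apply: (Q_translate pq) (leIl _ _) aq _ => [|u v uv pu].
  by apply: fullQ_xy pq (leIr _ _); rewrite lexI xa.
rewrite aq_b => vb /orP side; apply: (Qfull_lift full_yz uv (le_trans vb bz)).
case: side => [va|qu].
  by apply: le_trans pu; rewrite /p meetC leI2.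
by apply: le_trans qu; rewrite /q meetC leI2.
Qed.

Lemma Qfull_transfer_system : transfer_system Qfull.
Proof.
split.
- move=> x; split=> // a b xa [ab _] bx.
  by move: (lt_le_trans ab (le_trans bx xa)); rewrite ltxx.
- by move=> x y [xy _] [yx _]; apply/le_anti; rewrite xy yx.
- exact: Qfull_trans.
- by move=> x y [].
- exact: Qfull_restrict.
Qed.

Lemma Qfull_of_Q a b : Q a b -> Qfull a b.
Proof.
move=> Qab; have ab := Q_covers Qab; split=> [|u v au uv vb].
  exact: covers_le.
by have [-> ->] := covers_inside_cover ab au uv vb.
Qed.

(* A Q-full interval is the composite of a chain of Q-covers. *)
Lemma gen_transfer_of_Qfull y w : Qfull y w -> gen_transfer Q y w.
Proof.
move=> full_yw R [R_refl _ R_trans _ _] QR.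
elim/(@gt_ind _ M): y full_yw => y IH full_yw; have [yw fullQ] := full_yw.
case: (eqVneq y w) => [->|yw_neq]; first exact: R_refl.
have [c yc cw] : exists2 c, covers y c & c <= w.
  by apply: exists_cover_above; rewrite lt_def eq_sym yw_neq yw.
apply: (R_trans _ c); first by apply/QR/fullQ.
by case: (yc) => yc_lt _; apply: IH (Qfull_sub full_yw (ltW yc_lt) cw _).
Qed.

Lemma Qfull_of_gen_transfer x z : gen_transfer Q x z -> Qfull x z.
Proof. by apply; [exact: Qfull_transfer_system|exact: Qfull_of_Q]. Qed.

End SaturatedCover.

Theorem lemma3p10 (d : Order.disp_t) (M : finLatticeType d)
  (Q : M -> M -> Prop) :
  modular (M := M) -> saturated_cover Q ->
  forall x y w z : M, x <= y -> y <= w -> w <= z ->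
    gen_transfer Q x z -> gen_transfer Q y w.
Proof.
move=> modM satQ x y w z xy yw wz gen_xz.
apply: gen_transfer_of_Qfull.
exact: Qfull_sub (Qfull_of_gen_transfer modM satQ gen_xz) xy yw wz.
Qed.
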